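(* Let $d\geq 3$ and let $(M,g)$ be the Kasner spacetime $M=(0,\infty)\times\mathbb{R}^d$, $g=-dt^2+\sum_{i=1}^d t^{2p_i}\,dx_i^2$, with $\sum_i p_i=1$, $\sum_i p_i^2=1$ and at least one $p_i<0$, time-oriented by $\partial_t$. Then $(M,g)$ is future one-connected.
   Context: A timelike homotopy with fixed endpoints between two future directed timelike (FDTL) curves $\gamma^0,\gamma^1:[a,b]\to M$ with $\gamma^0(a)=\gamma^1(a)$, $\gamma^0(b)=\gamma^1(b)$ is a continuous map $\Gamma:[0,1]\times[a,b]\to M$ with $\Gamma(0,\cdot)=\gamma^0$, $\Gamma(1,\cdot)=\gamma^1$ and each $\Gamma(u,\cdot)$ an FDTL curve from $\gamma^0(a)$ to $\gamma^0(b)$. $(M,g)$ is future one-connected if for all $p,q\in M$ with $q$ in the timelike future of $p$, any two FDTL curves from $p$ to $q$ are timelike homotopic with fixed endpoints. Timelike curves are piecewise smooth. *)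

From Stdlib Require Import Reals Lra List.
From Coquelicot Require Import Coquelicot.
Open Scope R_scope.

(* A point of the Kasner spacetime M = (0,oo) x R^d is represented by its
   coordinates P : nat -> R, where P 0 = t and P i = x_i for 1 <= i <= d.
   Coordinates with index > d are irrelevant and ignored everywhere. *)
Definition pt := nat -> R.

Definition ptEq (d : nat) (P Q : pt) : Prop :=
  forall i : nat, (i <= d)%nat -> P i = Q i.

Definition in_M (P : pt) : Prop := 0 < P 0%nat.

Definition sumd (d : nat) (f : nat -> R) : R :=
  fold_right Rplus 0 (map f (List.seq 1 d)).

Definition kasner_exponents (d : nat) (p : nat -> R) : Prop :=
  sumd d p = 1 /\ sumd d (fun i => (p i) ^ 2) = 1 /\
  exists i : nat, (1 <= i <= d)%nat /\ p i < 0.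

Definition kasner_g (d : nat) (p : nat -> R) (P v : pt) : R :=
  - (v 0%nat) ^ 2 + sumd d (fun i => Rpower (P 0%nat) (2 * p i) * (v i) ^ 2).

(* future directed timelike vector; time orientation by d/dt, i.e.
   g(v, d/dt) = - v_0 < 0 *)
Definition FDTL_vector (d : nat) (p : nat -> R) (P v : pt) : Prop :=
  0 < v 0%nat /\ kasner_g d p P v < 0.

Definition smooth (f : R -> R) : Prop :=
  forall (n : nat) (x : R), ex_derive_n f n x.

(* There is a partition a = s_0 < s_1 < ... < s_k = b and, for each piece j,
   smooth coordinate functions f j i (i = 0..d) which agree with gamma on
   the closed interval [s_j, s_{j+1}]; the (one-sided, at breakpoints)
   tangent vectors are future directed timelike. *)
Definition FDTL_curve (d : nat) (p : nat -> R) (a b : R) (gamma : R -> pt)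
  : Prop :=
  a < b /\
  exists (k : nat) (s : nat -> R) (f : nat -> nat -> R -> R),
    s 0%nat = a /\ s k = b /\
    (forall j : nat, (j < k)%nat -> s j < s (S j)) /\
    (forall j : nat, (j < k)%nat ->
       (forall i : nat, (i <= d)%nat -> smooth (f j i)) /\
       (forall u : R, s j <= u <= s (S j) ->
          (forall i : nat, (i <= d)%nat -> gamma u i = f j i u) /\
          in_M (gamma u) /\
          FDTL_vector d p (gamma u) (fun i => Derive (f j i) u))).

Definition curve_from_to (d : nat) (a b : R) (gamma : R -> pt) (P Q : pt)
  : Prop := ptEq d (gamma a) P /\ ptEq d (gamma b) Q.

Definition timelike_future (d : nat) (p : nat -> R) (P Q : pt) : Prop :=
  in_M P /\ in_M Q /\
  exists (a b : R) (gamma : R -> pt),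
    FDTL_curve d p a b gamma /\ curve_from_to d a b gamma P Q.

Definition continuous_on_rect (d : nat) (a b : R) (G : R -> R -> pt) : Prop :=
  forall i : nat, (i <= d)%nat ->
  forall u s : R, 0 <= u <= 1 -> a <= s <= b ->
  forall eps : R, 0 < eps -> exists delta : R, 0 < delta /\
  forall u' s' : R, 0 <= u' <= 1 -> a <= s' <= b ->
    Rabs (u' - u) < delta -> Rabs (s' - s) < delta ->
    Rabs (G u' s' i - G u s i) < eps.

Definition timelike_homotopic (d : nat) (p : nat -> R) (a b : R)
  (gamma0 gamma1 : R -> pt) : Prop :=
  exists G : R -> R -> pt,
    continuous_on_rect d a b G /\
    (forall s : R, a <= s <= b ->
       ptEq d (G 0 s) (gamma0 s) /\ ptEq d (G 1 s) (gamma1 s)) /\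
    (forall u : R, 0 <= u <= 1 ->
       FDTL_curve d p a b (G u) /\
       curve_from_to d a b (G u) (gamma0 a) (gamma0 b)).

Definition future_one_connected (d : nat) (p : nat -> R) : Prop :=
  forall P Q : pt, timelike_future d p P Q ->
  forall (a b : R) (gamma0 gamma1 : R -> pt),
    FDTL_curve d p a b gamma0 -> curve_from_to d a b gamma0 P Q ->
    FDTL_curve d p a b gamma1 -> curve_from_to d a b gamma1 P Q ->
    timelike_homotopic d p a b gamma0 gamma1.

(* In the coordinates (t, x) the metric is -dt^2 + sum_i t^(2 p_i) dx_i^2, so t increases
   strictly along every future directed timelike curve, and at a fixed time the form is convex
   in the spatial components of a vector.  Given two such curves from P to Q, cut the time range
   by a fine grid containing the times of all their breakpoints and pick on each curve the
   points at these times.  By compactness, short chords of a smooth timelike arc stay uniformly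
   close to its tangent vectors, so each curve is timelike homotopic, by straight-line
   interpolation, to its inscribed polygon.  The two polygons have their vertices at the same
   times, and interpolating them vertex by vertex keeps every edge timelike by convexity. *)

From Stdlib Require Import Reals Lra Lia List.
From Coquelicot Require Import Coquelicot.
Open Scope R_scope.

Lemma sumd_ext d f g :
  (forall i, (1 <= i <= d)%nat -> f i = g i) -> sumd d f = sumd d g.
Proof.
  intros H. unfold sumd. assert (Hl : forall i, In i (seq 1 d) -> f i = g i).
  { intros i Hi. apply in_seq in Hi. apply H. lia. }
  induction (seq 1 d) as [|x l IH]; simpl in *; auto.
  rewrite Hl, IH; auto.
Qed.

Lemma sumd_le d f g :
  (forall i, (1 <= i <= d)%nat -> f i <= g i) -> sumd d f <= sumd d g.
Proof.
  intros H. unfold sumd. assert (Hl : forall i, In i (seq 1 d) -> f i <= g i).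
  { intros i Hi. apply in_seq in Hi. apply H. lia. }
  induction (seq 1 d) as [|x l IH]; simpl in *; [lra|].
  apply Rplus_le_compat; auto.
Qed.

Lemma sumd_lin d f g a b :
  sumd d (fun i => a * f i + b * g i) = a * sumd d f + b * sumd d g.
Proof. unfold sumd. induction (seq 1 d) as [|x l IH]; simpl; [ring|]. rewrite IH. ring. Qed.

Lemma sumd_scal d f a : sumd d (fun i => a * f i) = a * sumd d f.
Proof.
  rewrite (sumd_ext d _ (fun i => a * f i + 0 * f i)) by (intros; ring).
  rewrite sumd_lin. ring.
Qed.

Lemma Rpower_pos t q : 0 < Rpower t q.
Proof. apply exp_pos. Qed.

Definition kasner_form (d : nat) (p : nat -> R) (t : R) (v : pt) : R :=
  - (v 0%nat) ^ 2 + sumd d (fun i => Rpower t (2 * p i) * (v i) ^ 2).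

Lemma kasner_gE d p P v : kasner_g d p P v = kasner_form d p (P 0%nat) v.
Proof. reflexivity. Qed.

Lemma kasner_form_ext d p t v w : v 0%nat = w 0%nat ->
  (forall i, (1 <= i <= d)%nat -> v i = w i) -> kasner_form d p t v = kasner_form d p t w.
Proof.
  intros H0 H. unfold kasner_form. rewrite H0. f_equal. apply sumd_ext.
  intros i Hi. rewrite H; auto.
Qed.

Lemma kasner_formZ d p t v c :
  kasner_form d p t (fun i => c * v i) = c ^ 2 * kasner_form d p t v.
Proof.
  unfold kasner_form.
  rewrite (sumd_ext d _ (fun i => c ^ 2 * (Rpower t (2 * p i) * v i ^ 2))) by (intros; ring).
  rewrite sumd_scal. ring.
Qed.

Lemma kasner_form_convex d p t v w m : 0 <= m <= 1 -> v 0%nat = w 0%nat ->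
  kasner_form d p t (fun i => (1 - m) * v i + m * w i)
  <= (1 - m) * kasner_form d p t v + m * kasner_form d p t w.
Proof.
  intros Hm H0. unfold kasner_form. rewrite H0.
  replace ((1 - m) * w 0%nat + m * w 0%nat) with (w 0%nat) by ring.
  assert (E : forall A B, (1 - m) * (- w 0%nat ^ 2 + A) + m * (- w 0%nat ^ 2 + B)
                          = - w 0%nat ^ 2 + ((1 - m) * A + m * B)) by (intros; ring).
  rewrite E, <- sumd_lin. apply Rplus_le_compat_l, sumd_le. intros i _.
  assert (Hp := Rpower_pos t (2 * p i)).
  assert (0 <= Rpower t (2 * p i) * (m * (1 - m) * (v i - w i) ^ 2)).
  { apply Rmult_le_pos; [lra|]. apply Rmult_le_pos; [nra|apply pow2_ge_0]. }
  nra.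
Qed.

Lemma kasner_form_neg_convex d p t v w m : 0 <= m <= 1 -> v 0%nat = w 0%nat ->
  kasner_form d p t v < 0 -> kasner_form d p t w < 0 ->
  kasner_form d p t (fun i => (1 - m) * v i + m * w i) < 0.
Proof.
  intros Hm H0 Hv Hw. eapply Rle_lt_trans; [apply kasner_form_convex; auto|].
  destruct (Req_dec m 0) as [->|]; [lra|]. nra.
Qed.

Lemma smooth_plus f g : smooth f -> smooth g -> smooth (fun x => f x + g x).
Proof.
  intros Hf Hg n x. apply ex_derive_n_plus; apply filter_forall; intros y k _; auto.
Qed.

Lemma smooth_scal f a : smooth f -> smooth (fun x => a * f x).
Proof. intros Hf n x. apply ex_derive_n_scal_l, Hf. Qed.

Lemma smooth_affine A x0 c : smooth (fun x => A + (x - x0) * c).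
Proof.
  intros n x. apply (ex_derive_n_ext (fun x => (A - x0 * c) + c * x ^ 1)); [intros; ring|].
  apply (smooth_plus (fun _ => A - x0 * c)).
  - intros m y. apply ex_derive_n_const.
  - apply smooth_scal. intros m y. apply ex_derive_n_pow.
Qed.

Lemma smooth_ex_derive f x : smooth f -> ex_derive f x.
Proof. intros H. exact (H 1%nat x). Qed.

Lemma smooth_continuous f x : smooth f -> continuity_pt f x.
Proof.
  intros H. apply continuity_pt_filterlim. exact (ex_derive_continuous f x (H 1%nat x)).
Qed.

Lemma smooth_Derive_continuous f x : smooth f -> continuity_pt (Derive f) x.
Proof.
  intros H. apply continuity_pt_filterlim. exact (ex_derive_continuous (Derive f) x (H 2%nat x)).
Qed.

Lemma Derive_affine A x0 c x : Derive (fun y => A + (y - x0) * c) x = c.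
Proof. apply is_derive_unique. auto_derive; auto. ring. Qed.

Lemma Derive_blend f A x0 c l u : smooth f ->
  Derive (fun y => (1 - l) * f y + l * (A + (y - x0) * c)) u = (1 - l) * Derive f u + l * c.
Proof.
  intros Hf. rewrite Derive_plus, !Derive_scal, Derive_affine; auto;
    apply ex_derive_scal; [apply (Hf 1%nat)|auto_derive; auto].
Qed.

Lemma smooth_MVT f x y : smooth f -> x < y ->
  exists c, x <= c <= y /\ f y - f x = Derive f c * (y - x).
Proof.
  intros Hf Hxy. destruct (MVT_gen f x y (Derive f)) as [c [Hc E]].
  - intros z _. apply Derive_correct, smooth_ex_derive, Hf.
  - intros z _. apply smooth_continuous, Hf.
  - rewrite Rmin_left, Rmax_right in Hc by lra. eauto.
Qed.

Lemma uniform_pos (n : nat) (P : nat -> R -> Prop) :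
  (forall i x y, 0 < y <= x -> P i x -> P i y) ->
  (forall i, (i < n)%nat -> exists x, 0 < x /\ P i x) ->
  exists x, 0 < x /\ forall i, (i < n)%nat -> P i x.
Proof.
  intros Hm. induction n as [|n IH]; intros H.
  - exists 1. split; [lra|]. intros; lia.
  - destruct IH as [x [Hx HP]]; [intros i Hi; apply H; lia|].
    destruct (H n ltac:(lia)) as [y [Hy HPy]].
    exists (Rmin x y). split; [apply Rmin_pos; auto|].
    intros i Hi. destruct (Nat.eq_dec i n) as [->|Hne].
    + apply (Hm n y); auto. split; [apply Rmin_pos; auto|apply Rmin_r].
    + apply (Hm i x); [split; [apply Rmin_pos; auto|apply Rmin_l]|]. apply HP; lia.
Qed.

Lemma fin_choice {A : Type} (x0 : A) (K : nat) (P : nat -> A -> Prop) :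
  (forall m, (m < K)%nat -> exists y, P m y) ->
  exists J : nat -> A, forall m, (m < K)%nat -> P m (J m).
Proof.
  induction K as [|K IH]; intros H.
  - exists (fun _ => x0). intros; lia.
  - destruct IH as [J HJ]; [intros; apply H; lia|].
    destruct (H K ltac:(lia)) as [y Hy].
    exists (fun m => if (m =? K)%nat then y else J m). intros m Hm.
    destruct (m =? K)%nat eqn:E; [apply Nat.eqb_eq in E; subst; auto|].
    apply Nat.eqb_neq in E. apply HJ. lia.
Qed.

(** * Grids *)

Definition ascending (K : nat) (z : nat -> R) : Prop :=
  forall j, (j < K)%nat -> z j < z (S j).

Definition grid (K : nat) (z : nat -> R) (a b : R) : Prop :=
  ascending K z /\ z 0%nat = a /\ z K = b.

Lemma ascending_lt K z i j : ascending K z -> (i < j)%nat -> (j <= K)%nat -> z i < z j.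
Proof.
  intros H Hij. induction j as [|j IH]; [lia|]. intros Hj.
  destruct (Nat.eq_dec i j) as [->|Hne]; [apply H; lia|].
  assert (z i < z j) by (apply IH; lia). assert (z j < z (S j)) by (apply H; lia). lra.
Qed.

Lemma ascending_le K z i j : ascending K z -> (i <= j)%nat -> (j <= K)%nat -> z i <= z j.
Proof.
  intros H Hij Hj. destruct (Nat.eq_dec i j) as [->|]; [lra|].
  left. apply (ascending_lt K); auto; lia.
Qed.

Lemma ascending_lt_inv K z i j : ascending K z -> (i <= K)%nat -> (j <= K)%nat ->
  z i < z j -> (i < j)%nat.
Proof.
  intros H Hi Hj Hz. destruct (Nat.lt_ge_cases i j); auto.
  assert (z j <= z i) by (apply (ascending_le K); auto). lra.
Qed.

Lemma grid_range K z a b m : grid K z a b -> (m <= K)%nat -> a <= z m <= b.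
Proof.
  intros [H [<- <-]] Hm. split; apply (ascending_le K); auto; lia.
Qed.

Lemma ascending_find K z x : ascending K z -> z 0%nat <= x <= z K ->
  (exists m, (m <= K)%nat /\ z m = x) \/ (exists m, (m < K)%nat /\ z m < x < z (S m)).
Proof.
  intros HS. induction K as [|K IH]; intros Hx.
  - left. exists 0%nat. split; auto. lra.
  - destruct (Rle_lt_dec x (z K)) as [h|h].
    + destruct IH as [[m [Hm E]]|[m [Hm E]]].
      { intros j Hj; apply HS; lia. } { lra. }
      * left; exists m; split; auto; lia.
      * right; exists m; split; auto; lia.
    + destruct (Req_dec x (z (S K))) as [E|E].
      * left; exists (S K); split; auto.
      * right; exists K; split; [lia|lra].
Qed.

Lemma grid_size_pos K z a b : grid K z a b -> a < b -> (0 < K)%nat.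
Proof. intros [_ [H0 HK]] Hab. destruct K; [rewrite H0 in HK; lra|lia]. Qed.

Definition is_node (K : nat) (z : nat -> R) (x : R) : Prop :=
  exists m, (m <= K)%nat /\ z m = x.

Definition mesh_le (K : nat) (z : nat -> R) (h : R) : Prop :=
  forall m, (m < K)%nat -> z (S m) - z m <= h.

Definition insert_at (z : nat -> R) (m : nat) (x : R) (j : nat) : R :=
  if (j <=? m)%nat then z j else if (j =? S m)%nat then x else z (pred j).

Lemma insert_at_lo z m x j : (j <= m)%nat -> insert_at z m x j = z j.
Proof. intros H. unfold insert_at. apply Nat.leb_le in H. now rewrite H. Qed.

Lemma insert_at_mid z m x : insert_at z m x (S m) = x.
Proof.
  unfold insert_at. replace (S m <=? m)%nat with false by (symmetry; apply Nat.leb_gt; lia).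
  now rewrite Nat.eqb_refl.
Qed.

Lemma insert_at_hi z m x j : (S m < j)%nat -> insert_at z m x j = z (pred j).
Proof.
  intros H. unfold insert_at. replace (j <=? m)%nat with false by (symmetry; apply Nat.leb_gt; lia).
  now replace (j =? S m)%nat with false by (symmetry; apply Nat.eqb_neq; lia).
Qed.

Lemma grid_insert K z a b x : grid K z a b -> a <= x <= b ->
  exists K' z', grid K' z' a b /\ (forall y, is_node K z y -> is_node K' z' y) /\
    is_node K' z' x.
Proof.
  intros [HS [H0 HK]] Hx. subst a b.
  destruct (ascending_find K z x HS Hx) as [Hnode|[m [Hm E]]].
  - exists K, z. repeat split; auto.
  - exists (S K), (insert_at z m x). repeat split.
    + intros j Hj. destruct (Nat.lt_total j m) as [h|[h|h]].
      * rewrite !insert_at_lo by lia. apply HS; lia.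
      * subst j. rewrite insert_at_lo, insert_at_mid by lia. lra.
      * destruct (Nat.eq_dec j (S m)) as [->|hn].
        -- rewrite insert_at_mid, insert_at_hi by lia. simpl. lra.
        -- rewrite !insert_at_hi by lia. destruct j as [|j]; [lia|]. apply HS; lia.
    + rewrite insert_at_hi by lia. reflexivity.
    + intros y [n [Hn <-]]. destruct (Nat.le_gt_cases n m).
      * exists n. split; [lia|]. apply insert_at_lo; auto.
      * exists (S n). split; [lia|]. rewrite insert_at_hi by lia. reflexivity.
    + exists (S m). split; [lia|]. apply insert_at_mid.
Qed.

Lemma grid_through a b (L : list R) : a < b -> (forall x, In x L -> a <= x <= b) ->
  exists K z, grid K z a b /\ forall x, In x L -> is_node K z x.
Proof.
  intros Hab. induction L as [|y L IH]; intros HL.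
  - exists 1%nat, (fun j => if (j =? 0)%nat then a else b). repeat split; auto.
    + intros j Hj. replace j with 0%nat by lia. simpl. lra.
    + intros x [].
  - destruct IH as [K [z [Hz Hn]]]; [intros x Hx; apply HL; right; auto|].
    destruct (grid_insert K z a b y Hz) as [K' [z' [Hz' [Hold Hnew]]]].
    { apply HL. left. auto. }
    exists K', z'. split; auto. intros x [<-|Hx]; auto.
Qed.

Lemma grid_fine_through a b h (L : list R) : a < b -> 0 < h ->
  (forall x, In x L -> a <= x <= b) ->
  exists K z, grid K z a b /\ (forall x, In x L -> is_node K z x) /\ mesh_le K z h.
Proof.
  intros Hab Hh HL.
  destruct (INR_archimed h (b - a) Hh) as [M HM].
  assert (HM0 : (0 < M)%nat) by (destruct M; [simpl in HM; lra|lia]).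
  assert (HMr : 0 < INR M) by (apply lt_0_INR; auto).
  set (g := (b - a) / INR M).
  assert (Hg : 0 < g) by (unfold g; apply Rdiv_lt_0_compat; lra).
  assert (Hgh : g <= h) by (unfold g; apply Rle_div_l; lra).
  set (u := fun m : nat => a + INR m * g).
  assert (Hu : grid M u a b).
  { repeat split.
    - intros j _. unfold u. rewrite S_INR. lra.
    - unfold u. simpl. ring.
    - unfold u, g. field. lra. }
  destruct (grid_through a b (L ++ map u (seq 0 (S M))) Hab) as [K [z [Hz Hn]]].
  { intros x Hx. apply in_app_or in Hx. destruct Hx as [Hx|Hx]; auto.
    apply in_map_iff in Hx. destruct Hx as [m [<- Hm]]. apply in_seq in Hm.
    apply (grid_range M u); auto; lia. }
  exists K, z. split; [auto|split].
  { intros x Hx. apply Hn, in_or_app. auto. }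
  assert (Hun : forall m, (m <= M)%nat -> is_node K z (u m)).
  { intros m Hm. apply Hn, in_or_app. right. apply in_map, in_seq. lia. }
  destruct Hz as [HS [H0 HK]]. destruct Hu as [HuS [Hu0 HuM]].
  intros k Hk.
  assert (Hzk : a <= z k < b).
  { split; [rewrite <- H0; apply (ascending_le K); auto; lia|].
    rewrite <- HK. apply (ascending_lt K); auto. }
  (* the uniform node following [z k] comes no later than [z (S k)] *)
  assert (Hnext : exists m, (m < M)%nat /\ u m <= z k < u (S m)).
  { destruct (ascending_find M u (z k) HuS) as [[m [Hm E]]|[m [Hm E]]]; [lra| |].
    - assert (m < M)%nat by (destruct (Nat.eq_dec m M) as [->|]; [lra|lia]).
      exists m. split; [auto|]. assert (u m < u (S m)) by auto. lra.
    - exists m. split; [auto|lra]. }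
  destruct Hnext as [m [Hm Hum]].
  destruct (Hun (S m) ltac:(lia)) as [j [Hj Ej]].
  assert (k < j)%nat by (apply (ascending_lt_inv K z); auto; [lia|lra]).
  assert (z (S k) <= z j) by (apply (ascending_le K); auto; lia).
  assert (u (S m) - u m = g) by (unfold u; rewrite S_INR; ring). lra.
Qed.

Definition refines (K : nat) (z : nat -> R) (k : nat) (s : nat -> R) : Prop :=
  forall j, (j <= k)%nat -> is_node K z (s j).

Lemma refines_segment k s K z a b m : grid k s a b -> grid K z a b -> refines K z k s ->
  (m < K)%nat -> exists j, (j < k)%nat /\ s j <= z m /\ z (S m) <= s (S j).
Proof.
  intros [Hs [H0 HK]] [Hz [Hz0 HzK]] Hn Hm.
  assert (Hin : s 0%nat <= z m <= s k).
  { rewrite H0, HK, <- Hz0, <- HzK. split; apply (ascending_le K); auto; lia. }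
  assert (Hlt : z m < s k) by (rewrite HK, <- HzK; apply (ascending_lt K); auto).
  assert (Hj : exists j, (j < k)%nat /\ s j <= z m < s (S j)).
  { destruct (ascending_find k s (z m) Hs Hin) as [[j [Hj E]]|[j [Hj E]]].
    - exists j. destruct (Nat.eq_dec j k) as [->|]; [lra|].
      assert (s j < s (S j)) by (apply Hs; lia). split; [lia|lra].
    - exists j. split; [auto|lra]. }
  destruct Hj as [j [Hj [E1 E2]]]. exists j. split; [auto|split; [auto|]].
  destruct (Hn (S j) ltac:(lia)) as [n [HnK En]].
  assert (m < n)%nat by (apply (ascending_lt_inv K z); auto; [lia|lra]).
  rewrite <- En. apply (ascending_le K); auto; lia.
Qed.

Definition clamp (a b x : R) : R := Rmax a (Rmin b x).

Lemma clamp_in a b x : a <= b -> a <= clamp a b x <= b.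
Proof. intros H. unfold clamp, Rmax, Rmin. repeat destruct Rle_dec; lra. Qed.

Lemma clamp_id a b x : a <= x <= b -> clamp a b x = x.
Proof. intros H. unfold clamp, Rmax, Rmin. repeat destruct Rle_dec; lra. Qed.

Lemma clamp_lo a b x : a <= b -> x <= a -> clamp a b x = a.
Proof. intros. unfold clamp, Rmax, Rmin. repeat destruct Rle_dec; lra. Qed.

Lemma clamp_hi a b x : a <= b -> b <= x -> clamp a b x = b.
Proof. intros. unfold clamp, Rmax, Rmin. repeat destruct Rle_dec; lra. Qed.

Lemma continuity_pt_epsilon f x : continuity_pt f x <->
  (forall eps, 0 < eps -> exists del, 0 < del /\
     forall y, Rabs (y - x) < del -> Rabs (f y - f x) < eps).
Proof.
  split; intros H eps Heps; destruct (H eps Heps) as [al [Hal Hy]]; exists al; split; auto.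
  - intros y Hyx. destruct (Req_dec y x) as [->|Hne].
    + rewrite Rminus_diag, Rabs_R0. auto.
    + apply Hy. repeat split; auto.
  - intros y [_ Hyx]. apply Hy, Hyx.
Qed.

Lemma clamp_continuous a b x : a <= b -> continuity_pt (clamp a b) x.
Proof.
  intros H. apply continuity_pt_epsilon. intros eps He. exists eps. split; auto.
  intros y Hy. eapply Rle_lt_trans; [|apply Hy].
  unfold clamp, Rmax, Rmin. repeat destruct Rle_dec; unfold Rabs; repeat destruct Rcase_abs; lra.
Qed.

Lemma continuity_pt_paste (A B : R -> R) c x :
  (forall y, continuity_pt A y) -> (forall y, continuity_pt B y) -> A c = B c ->
  continuity_pt (fun y => if Rle_dec y c then A y else B y) x.
Proof.
  intros HA HB Hc. apply continuity_pt_epsilon. intros eps He.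
  destruct (proj1 (continuity_pt_epsilon A x) (HA x) eps He) as [d1 [Hd1 H1]].
  destruct (proj1 (continuity_pt_epsilon B x) (HB x) eps He) as [d2 [Hd2 H2]].
  destruct (Rtotal_order x c) as [Hx|[<-|Hx]].
  - exists (Rmin d1 (c - x)). split; [apply Rmin_pos; lra|].
    intros y Hy. assert (Hm1 := Rmin_l d1 (c - x)). assert (Hm2 := Rmin_r d1 (c - x)).
    destruct (Rle_dec y c); [|unfold Rabs in Hy; destruct Rcase_abs in Hy; lra].
    destruct (Rle_dec x c); [apply H1; lra|lra].
  - exists (Rmin d1 d2). split; [apply Rmin_pos; lra|].
    intros y Hy. assert (Hm1 := Rmin_l d1 d2). assert (Hm2 := Rmin_r d1 d2).
    destruct (Rle_dec x x); [|lra]. destruct (Rle_dec y x).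
    + apply H1. lra.
    + rewrite Hc. apply H2. lra.
  - exists (Rmin d2 (x - c)). split; [apply Rmin_pos; lra|].
    intros y Hy. assert (Hm1 := Rmin_l d2 (x - c)). assert (Hm2 := Rmin_r d2 (x - c)).
    destruct (Rle_dec y c); [unfold Rabs in Hy; destruct Rcase_abs in Hy; lra|].
    destruct (Rle_dec x c); [lra|]. apply H2. lra.
Qed.

(** * Piecewise smooth timelike curves *)

Definition smooth_FDTL (d : nat) (p : nat -> R) (x y : R) (F : nat -> R -> R) : Prop :=
  (forall i, (i <= d)%nat -> smooth (F i)) /\
  forall u, x <= u <= y ->
    0 < F 0%nat u /\ 0 < Derive (F 0%nat) u /\
    kasner_form d p (F 0%nat u) (fun i => Derive (F i) u) < 0.

Definition FDTL_pieces (d : nat) (p : nat -> R) (a b : R) (g : R -> pt)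
  (k : nat) (s : nat -> R) (f : nat -> nat -> R -> R) : Prop :=
  grid k s a b /\
  forall j, (j < k)%nat -> smooth_FDTL d p (s j) (s (S j)) (f j) /\
    forall u, s j <= u <= s (S j) -> forall i, (i <= d)%nat -> g u i = f j i u.

Lemma FDTL_curveE d p a b g :
  FDTL_curve d p a b g <-> a < b /\ exists k s f, FDTL_pieces d p a b g k s f.
Proof.
  unfold FDTL_curve, FDTL_pieces, grid, ascending, smooth_FDTL, in_M, FDTL_vector.
  split.
  - intros [Hab [k [s [f [H0 [Hk [HS HP]]]]]]].
    split; [exact Hab|]. exists k, s, f. split; [auto|].
    intros j Hj. destruct (HP j Hj) as [Hsm Hpc]. split; [split; [exact Hsm|]|].
    + intros u Hu. destruct (Hpc u Hu) as [E [HM [Hv0 HQ]]].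
      rewrite kasner_gE, E in * by lia. auto.
    + intros u Hu. apply Hpc, Hu.
  - intros [Hab [k [s [f [[HS [H0 Hk]] HP]]]]].
    split; [exact Hab|]. exists k, s, f. do 3 (split; [auto|]).
    intros j Hj. destruct (HP j Hj) as [[Hsm Hgood] E]. split; [exact Hsm|].
    intros u Hu. rewrite kasner_gE, !E by (auto; lia).
    split; [exact (E u Hu)|]. split; [apply Hgood, Hu|]. split; apply Hgood, Hu.
Qed.

Section PiecewiseCurve.

Variables (d : nat) (p : nat -> R) (a b : R) (g : R -> pt)
  (k : nat) (s : nat -> R) (f : nat -> nat -> R -> R).
Hypothesis Hab : a < b.
Hypothesis Hg : FDTL_pieces d p a b g k s f.

Lemma pieces_nonempty : (0 < k)%nat.
Proof. exact (grid_size_pos k s a b (proj1 Hg) Hab). Qed.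

Lemma curve_time_start_pos : 0 < g a 0%nat.
Proof.
  assert (Hk := pieces_nonempty). destruct Hg as [[HS [H0 _]] HP].
  destruct (HP 0%nat Hk) as [[_ Hgood] E]. assert (s 0%nat < s 1%nat) by (apply HS, Hk).
  rewrite <- H0, E by (auto; lra || lia). apply Hgood. lra.
Qed.

Lemma curve_continuous i x : (i <= d)%nat -> continuity_pt (fun y => g (clamp a b y) i) x.
Proof.
  assert (Hk := pieces_nonempty). destruct Hg as [[HS [H0 HK]] HP]. intros Hi.
  assert (Hpiece : forall n y, (n < k)%nat ->
    continuity_pt (fun u => f n i (clamp (s n) (s (S n)) u)) y).
  { intros n y Hn. destruct (HP n Hn) as [[Hsm _] _].
    apply continuity_pt_comp; [apply clamp_continuous|apply smooth_continuous, Hsm, Hi].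
    left. apply HS, Hn. }
  assert (Hgf : forall n u, (n < k)%nat -> s n <= u <= s (S n) -> g u i = f n i u).
  { intros n u Hn Hu. destruct (HP n Hn) as [_ E]. apply E; auto. }
  rewrite <- HK. enough (C : forall n y, (1 <= n <= k)%nat ->
    continuity_pt (fun u => g (clamp a (s n) u) i) y) by (apply C; lia).
  intros n. induction n as [|n IH]; intros y Hn; [lia|].
  assert (Hn1 : s n < s (S n)) by (apply HS; lia).
  destruct (Nat.eq_dec n 0) as [->|Hn0].
  - apply (continuity_pt_ext (fun u => f 0%nat i (clamp (s 0%nat) (s 1%nat) u))); [|apply Hpiece; lia].
    intros u. rewrite (Hgf 0%nat); [now rewrite H0|lia|rewrite H0; apply clamp_in; lra].
  - assert (Han : a <= s n) by (rewrite <- H0; apply (ascending_le k); auto; lia).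
    apply (continuity_pt_ext (fun u => if Rle_dec u (s n) then g (clamp a (s n) u) i
                                       else f n i (clamp (s n) (s (S n)) u))).
    + intros u. destruct (Rle_dec u (s n)).
      * f_equal. unfold clamp, Rmax, Rmin. repeat destruct Rle_dec; lra.
      * rewrite <- Hgf by (try apply clamp_in; lra || lia).
        f_equal. unfold clamp, Rmax, Rmin. repeat destruct Rle_dec; lra.
    + apply continuity_pt_paste; [intros; apply IH; lia|intros; apply Hpiece; lia|].
      rewrite !clamp_id by lra. apply Hgf; [lia|lra].
Qed.

Lemma curve_time_speed : exists c, 0 < c /\ forall j, (j < k)%nat ->
  forall x y, s j <= x -> x < y -> y <= s (S j) -> c * (y - x) <= g y 0%nat - g x 0%nat.
Proof.
  destruct Hg as [[HS _] HP].
  apply (uniform_pos k (fun j c => forall x y, s j <= x -> x < y -> y <= s (S j) ->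
                                  c * (y - x) <= g y 0%nat - g x 0%nat)).
  { intros j c1 c2 Hc H x y H1 H2 H3. specialize (H x y H1 H2 H3).
    assert (c2 * (y - x) <= c1 * (y - x)) by (apply Rmult_le_compat_r; lra). lra. }
  intros j Hj. destruct (HP j Hj) as [[Hsm Hgood] E].
  assert (Hsj : s j < s (S j)) by (apply HS; auto).
  destruct (continuity_ab_min (Derive (f j 0%nat)) (s j) (s (S j))) as [xm [Hm Hxm]]; [lra| |].
  { intros c _. apply smooth_Derive_continuous, Hsm. lia. }
  exists (Derive (f j 0%nat) xm). split; [apply Hgood, Hxm|].
  intros x y H1 H2 H3. rewrite !E by (lra || lia).
  destruct (smooth_MVT (f j 0%nat) x y) as [c [Hc ->]]; [apply Hsm; lia|lra|].
  apply Rmult_le_compat_r; [lra|]. apply Hm. lra.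
Qed.

Lemma curve_time_lt x y : a <= x -> x < y -> y <= b -> g x 0%nat < g y 0%nat.
Proof.
  destruct curve_time_speed as [c [Hc Hspeed]].
  assert (Hk := pieces_nonempty). destruct Hg as [[HS [H0 HK]] _].
  assert (Hpiece : forall n x y, (n < k)%nat -> s n <= x -> x < y -> y <= s (S n) ->
    g x 0%nat < g y 0%nat).
  { intros n x0 y0 Hn H1 H2 H3. assert (H := Hspeed n Hn x0 y0 H1 H2 H3).
    assert (0 < c * (y0 - x0)) by (apply Rmult_lt_0_compat; lra). lra. }
  enough (C : forall n, (n <= k)%nat -> forall x y, a <= x -> x < y -> y <= s n ->
    g x 0%nat < g y 0%nat) by (intros; apply (C k); auto; lra).
  induction n as [|n IH]; intros Hn x0 y0 Hx Hxy Hy; [rewrite H0 in Hy; lra|].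
  destruct (Rle_dec y0 (s n)); [apply IH; auto; lia|].
  destruct (Rle_dec (s n) x0); [apply (Hpiece n); auto; lia || lra|].
  assert (Han : a <= s n) by (rewrite <- H0; apply (ascending_le k); auto; lia).
  assert (g x0 0%nat < g (s n) 0%nat) by (apply IH; auto; lia || lra).
  assert (g (s n) 0%nat < g y0 0%nat) by (apply (Hpiece n); auto; lia || lra).
  lra.
Qed.

Lemma curve_time_le x y : a <= x -> x <= y -> y <= b -> g x 0%nat <= g y 0%nat.
Proof.
  intros H1 H2 H3. destruct (Req_dec x y) as [->|]; [lra|].
  left. apply curve_time_lt; lra.
Qed.

Lemma curve_time_inj x y : a <= x <= b -> a <= y <= b -> g x 0%nat = g y 0%nat -> x = y.
Proof.
  intros Hx Hy E. destruct (Rtotal_order x y) as [h|[h|h]]; auto.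
  - assert (g x 0%nat < g y 0%nat) by (apply curve_time_lt; lra). lra.
  - assert (g y 0%nat < g x 0%nat) by (apply curve_time_lt; lra). lra.
Qed.

Lemma curve_time_ivt t : g a 0%nat <= t <= g b 0%nat -> exists x, a <= x <= b /\ g x 0%nat = t.
Proof.
  intros Ht.
  assert (Hc : continuity (fun y => g (clamp a b y) 0%nat))
    by (intros x; apply curve_continuous; lia).
  destruct (IVT_gen _ a b t Hc) as [x [Hx E]].
  { rewrite !clamp_id by lra. rewrite Rmin_left, Rmax_right; auto; left; apply curve_time_lt; lra. }
  rewrite Rmin_left, Rmax_right in Hx by lra.
  exists x. split; auto. rewrite clamp_id in E; auto.
Qed.

End PiecewiseCurve.

(** * Short chords of a timelike arc *)

Lemma Rpower_continuous q x : 0 < x -> continuity_pt (fun y => Rpower y q) x.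
Proof.
  intros Hx. apply continuity_pt_filterlim.
  apply (ex_derive_continuous (fun y => Rpower y q) x). unfold Rpower. auto_derive. auto.
Qed.

Lemma Rpower_le_max lo hi t q : 0 < lo -> lo <= t <= hi ->
  Rpower t q <= Rmax (Rpower hi q) (Rpower lo q).
Proof.
  intros Hlo Ht. unfold Rpower.
  assert (Hexp : forall x y, x <= y -> exp x <= exp y)
    by (intros x y [Hxy| ->]; [left; apply exp_increasing, Hxy|lra]).
  assert (H1 : ln lo <= ln t) by (apply ln_le; lra).
  assert (H2 : ln t <= ln hi) by (apply ln_le; lra).
  destruct (Rle_dec 0 q).
  - eapply Rle_trans; [|apply Rmax_l]. apply Hexp, Rmult_le_compat_l; auto.
  - eapply Rle_trans; [|apply Rmax_r]. apply Hexp. nra.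
Qed.

Lemma continuity_2d_pt_fst (h : R -> R) x y :
  continuity_pt h x -> continuity_2d_pt (fun u _ => h u) x y.
Proof.
  intros H. apply (continuity_1d_2d_pt_comp h (fun u _ => u)); auto.
  apply continuity_2d_pt_id1.
Qed.

Lemma continuity_2d_pt_snd (h : R -> R) x y :
  continuity_pt h y -> continuity_2d_pt (fun _ v => h v) x y.
Proof.
  intros H. apply (continuity_1d_2d_pt_comp h (fun _ v => v)); auto.
  apply continuity_2d_pt_id2.
Qed.

Lemma continuity_2d_pt_Rmax F G x y : continuity_2d_pt F x y -> continuity_2d_pt G x y ->
  continuity_2d_pt (fun u v => Rmax (F u v) (G u v)) x y.
Proof.
  intros HF HG.
  apply (continuity_2d_pt_ext (fun u v => (F u v + G u v + Rabs (F u v - G u v)) * / 2)).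
  { intros u v. unfold Rmax, Rabs. destruct Rle_dec, Rcase_abs; lra. }
  apply continuity_2d_pt_mult; [|apply continuity_2d_pt_const].
  apply continuity_2d_pt_plus; [apply continuity_2d_pt_plus; auto|].
  apply continuity_1d_2d_pt_comp; [apply Rcontinuity_abs|apply continuity_2d_pt_minus; auto].
Qed.

Lemma continuity_2d_pt_sumd d (G : nat -> R -> R -> R) x y :
  (forall i, (1 <= i <= d)%nat -> continuity_2d_pt (G i) x y) ->
  continuity_2d_pt (fun u v => sumd d (fun i => G i u v)) x y.
Proof.
  intros H. unfold sumd. assert (Hl : forall i, In i (seq 1 d) -> continuity_2d_pt (G i) x y).
  { intros i Hi. apply in_seq in Hi. apply H. lia. }
  induction (seq 1 d) as [|j l IH]; simpl in *; [apply continuity_2d_pt_const|].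
  apply continuity_2d_pt_plus; auto.
Qed.

Lemma uniform_continuity_fin (n : nat) (h : nat -> R -> R) al be eps : 0 < eps ->
  (forall i x, (i <= n)%nat -> al <= x <= be -> continuity_pt (h i) x) ->
  exists del, 0 < del /\ forall i x y, (i <= n)%nat -> al <= x <= be -> al <= y <= be ->
    Rabs (x - y) < del -> Rabs (h i x - h i y) < eps.
Proof.
  intros He Hc.
  destruct (uniform_pos (S n) (fun i del => forall x y, al <= x <= be -> al <= y <= be ->
    Rabs (x - y) < del -> Rabs (h i x - h i y) < eps)) as [del [Hdel H]].
  { intros i x y Hy Hx x0 y0 H1 H2 H3. apply Hx; auto. lra. }
  { intros i Hi. destruct (Heine_cor2 (f := h i) (a := al) (b := be)
      (fun x Hx => Hc i x ltac:(lia) Hx) (mkposreal _ He)) as [del Hd].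
    exists del. split; [apply cond_pos|exact Hd]. }
  exists del. split; [exact Hdel|]. intros i x y Hi. apply H. lia.
Qed.

Lemma Rabs_lerp_sub A B l : 0 <= l <= 1 -> Rabs ((1 - l) * A + l * B - A) <= Rabs (B - A).
Proof.
  intros Hl. replace ((1 - l) * A + l * B - A) with (l * (B - A)) by ring.
  rewrite Rabs_mult, Rabs_right by lra.
  assert (l * Rabs (B - A) <= 1 * Rabs (B - A)) by (apply Rmult_le_compat_r; [apply Rabs_pos|lra]).
  lra.
Qed.

Lemma lerp_pos A B l : 0 <= l <= 1 -> 0 < A -> 0 < B -> 0 < (1 - l) * A + l * B.
Proof.
  intros Hl HA HB. destruct (Rle_lt_or_eq_dec 0 l (proj1 Hl)) as [Hl0| <-]; [|lra].
  assert (0 <= (1 - l) * A) by (apply Rmult_le_pos; lra).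
  assert (0 < l * B) by (apply Rmult_lt_0_compat; lra). lra.
Qed.

Lemma secant_near (h : R -> R) x y u e : x < y -> x <= u <= y ->
  Rabs (h x - h u) <= e -> Rabs (h y - h x) <= e ->
  Rabs (h x + (u - x) * ((h y - h x) / (y - x)) - h u) <= 2 * e.
Proof.
  intros Hxy Hu Hxu Hyx.
  assert (Hr : 0 <= (u - x) / (y - x) <= 1)
    by (split; [apply Rdiv_le_0_compat; lra|apply Rle_div_l; lra]).
  replace (h x + (u - x) * ((h y - h x) / (y - x)) - h u)
    with ((u - x) / (y - x) * (h y - h x) + (h x - h u)) by (field; lra).
  eapply Rle_trans; [apply Rabs_triang|]. rewrite Rabs_mult, (Rabs_right (_ / _)) by lra.
  assert ((u - x) / (y - x) * Rabs (h y - h x) <= 1 * e)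
    by (apply Rmult_le_compat; auto; try lra; apply Rabs_pos).
  lra.
Qed.

Definition chord (F : nat -> R -> R) (x y : R) (i : nat) : R := (F i y - F i x) / (y - x).

Definition timelike_chord (d : nat) (p : nat -> R) (F : nat -> R -> R) (x y : R) : Prop :=
  (forall l, 0 <= l <= 1 -> smooth_FDTL d p x y
     (fun i u => (1 - l) * F i u + l * (F i x + (u - x) * chord F x y i))) /\
  (forall t, F 0%nat x <= t <= F 0%nat y -> kasner_form d p t (chord F x y) < 0).

Section ShortChords.

Variables (d : nat) (p : nat -> R) (al be : R) (F : nat -> R -> R).
Hypothesis Halbe : al < be.
Hypothesis HF : smooth_FDTL d p al be F.

Let T := F 0%nat.
Let W i := Derive (F i).

(* [Phi s e] bounds the form over the box of half-width [e] around the point and velocity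
   of the path at parameter [s]. *)
Let Phi (s e : R) : R :=
  - (W 0%nat s - e) ^ 2 + sumd d (fun i =>
      Rmax (Rpower (T s + e) (2 * p i)) (Rpower (T s - e) (2 * p i)) * (Rabs (W i s) + e) ^ 2).

Lemma Phi_continuous s : al <= s <= be -> continuity_2d_pt Phi s 0.
Proof.
  intros Hs. destruct HF as [Hsm Hgood]. destruct (Hgood s Hs) as [HT _].
  assert (HWc : forall i, (i <= d)%nat -> continuity_2d_pt (fun u v => W i u) s 0)
    by (intros i Hi; apply continuity_2d_pt_fst, smooth_Derive_continuous, Hsm, Hi).
  assert (HTc : continuity_2d_pt (fun u v => T u) s 0)
    by (apply continuity_2d_pt_fst, smooth_continuous, Hsm; lia).
  assert (Hsq : forall G, continuity_2d_pt G s 0 -> continuity_2d_pt (fun u v => G u v ^ 2) s 0).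
  { intros G HG. simpl. apply continuity_2d_pt_mult; auto.
    apply continuity_2d_pt_mult; [auto|apply continuity_2d_pt_const]. }
  assert (Hpow : forall q G, 0 < G s 0 -> continuity_2d_pt G s 0 ->
    continuity_2d_pt (fun u v => Rpower (G u v) q) s 0).
  { intros q G HG0 HG. apply (continuity_1d_2d_pt_comp (fun x => Rpower x q)); auto.
    apply Rpower_continuous, HG0. }
  unfold Phi. apply continuity_2d_pt_plus.
  - apply continuity_2d_pt_opp, Hsq, continuity_2d_pt_minus; [apply HWc; lia|apply continuity_2d_pt_id2].
  - apply continuity_2d_pt_sumd. intros i Hi. apply continuity_2d_pt_mult.
    + apply continuity_2d_pt_Rmax; apply Hpow; cbv beta; unfold T in *; try lra.
      * apply continuity_2d_pt_plus; [auto|apply continuity_2d_pt_id2].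
      * apply continuity_2d_pt_minus; [auto|apply continuity_2d_pt_id2].
    + apply Hsq, continuity_2d_pt_plus; [|apply continuity_2d_pt_id2].
      apply (continuity_1d_2d_pt_comp Rabs (fun u v => W i u)); [apply Rcontinuity_abs|].
      apply HWc. lia.
Qed.

Lemma Phi_at_0 s : Phi s 0 = kasner_form d p (T s) (fun i => W i s).
Proof.
  unfold Phi, kasner_form. rewrite Rminus_0_r. f_equal. apply sumd_ext. intros i _.
  rewrite Rplus_0_r, Rminus_0_r, Rmax_left, Rplus_0_r, pow2_abs by lra. reflexivity.
Qed.

Lemma kasner_form_le_Phi s e t v : al <= s <= be -> 0 <= e <= W 0%nat s -> e <= T s / 2 ->
  Rabs (t - T s) <= e -> (forall i, (i <= d)%nat -> Rabs (v i - W i s) <= e) ->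
  kasner_form d p t v <= Phi s e.
Proof.
  intros Hs He HeT Ht Hv. assert (HT : 0 < T s) by apply HF, Hs.
  unfold kasner_form, Phi. apply Rplus_le_compat.
  - assert (H0 := Hv 0%nat ltac:(lia)).
    assert (W 0%nat s - e <= v 0%nat) by (unfold Rabs in H0; destruct Rcase_abs in H0; lra).
    simpl. nra.
  - apply sumd_le. intros i Hi. apply Rmult_le_compat.
    + left; apply Rpower_pos.
    + apply pow2_ge_0.
    + apply Rpower_le_max; [lra|]. unfold Rabs in Ht; destruct Rcase_abs in Ht; lra.
    + assert (H0 := Hv i ltac:(lia)).
      assert (Rabs (v i) <= Rabs (W i s) + e).
      { replace (v i) with (W i s + (v i - W i s)) by ring.
        eapply Rle_trans; [apply Rabs_triang|lra]. }
      rewrite <- (pow2_abs (v i)). assert (0 <= Rabs (v i)) by apply Rabs_pos. nra.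
Qed.

Lemma timelike_margin : exists eps, 0 < eps /\ forall s, al <= s <= be -> forall t v,
  Rabs (t - T s) <= eps -> (forall i, (i <= d)%nat -> Rabs (v i - W i s) <= eps) ->
  kasner_form d p t v < 0.
Proof.
  destruct HF as [Hsm Hgood].
  destruct (continuity_ab_maj (fun s => Phi s 0) al be) as [sM [HM HsM]]; [lra| |].
  { intros c Hc. apply continuity_pt_epsilon. intros eps He.
    destruct (Phi_continuous c Hc (mkposreal eps He)) as [del Hd].
    exists del. split; [apply cond_pos|]. intros u Hu. apply Hd; auto.
    rewrite Rminus_diag, Rabs_R0. apply cond_pos. }
  assert (Hneg : Phi sM 0 < 0) by (rewrite Phi_at_0; apply Hgood, HsM).
  destruct (continuity_ab_min (W 0%nat) al be) as [s1 [Hm1 Hs1]]; [lra| |].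
  { intros c Hc. apply smooth_Derive_continuous, Hsm. lia. }
  destruct (continuity_ab_min T al be) as [s2 [Hm2 Hs2]]; [lra| |].
  { intros c Hc. apply smooth_continuous, Hsm. lia. }
  assert (HW1 : 0 < W 0%nat s1) by apply Hgood, Hs1.
  assert (HT2 : 0 < T s2) by apply Hgood, Hs2.
  destruct (uniform_continuity_2d_1d Phi al be 0 Phi_continuous (mkposreal (- Phi sM 0) ltac:(lra)))
    as [del Hdel].
  assert (Hdp := cond_pos del).
  set (eps := Rmin del (Rmin (W 0%nat s1) (T s2 / 2))).
  assert (He1 : eps <= del) by apply Rmin_l.
  assert (He2 : eps <= W 0%nat s1) by (eapply Rle_trans; [apply Rmin_r|apply Rmin_l]).
  assert (He3 : eps <= T s2 / 2) by (eapply Rle_trans; [apply Rmin_r|apply Rmin_r]).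
  assert (He0 : 0 < eps) by (apply Rmin_pos; [lra|apply Rmin_pos; lra]).
  exists eps. split; [exact He0|]. intros s Hs t v Ht Hv.
  assert (Hle : kasner_form d p t v <= Phi s eps).
  { apply kasner_form_le_Phi; auto; [assert (H := Hm1 s Hs)|assert (H := Hm2 s Hs)]; lra. }
  assert (Hc := Hdel s 0 s eps Hs ltac:(lra) Hs ltac:(lra) ltac:(rewrite Rminus_diag, Rabs_R0; lra)).
  assert (HsM' := HM s Hs). simpl in Hc, HsM'.
  unfold Rabs in Hc; destruct Rcase_abs in Hc; lra.
Qed.

Lemma chord_near_Derive eps : 0 < eps -> exists del, 0 < del /\ forall x y,
  al <= x -> x < y -> y <= be -> y - x < del ->
  forall i u, (i <= d)%nat -> x <= u <= y -> Rabs (chord F x y i - W i u) < eps.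
Proof.
  intros He. destruct HF as [Hsm _].
  destruct (uniform_continuity_fin d W al be eps He) as [del [Hdel Hu]].
  { intros i x Hi _. apply smooth_Derive_continuous, Hsm, Hi. }
  exists del. split; [exact Hdel|]. intros x y Hx Hxy Hy Hyx i u Hi Hu'.
  destruct (smooth_MVT (F i) x y (Hsm i Hi) Hxy) as [c [Hc E]].
  unfold chord. rewrite E. replace (Derive (F i) c * (y - x) / (y - x)) with (W i c) by (unfold W; field; lra).
  apply Hu; auto; try lra. unfold Rabs; destruct Rcase_abs; lra.
Qed.

Lemma chord_time_pos x y : al <= x -> x < y -> y <= be -> 0 < chord F x y 0%nat.
Proof.
  intros Hx Hxy Hy. destruct HF as [Hsm Hgood].
  destruct (smooth_MVT (F 0%nat) x y (Hsm 0%nat ltac:(lia)) Hxy) as [c [Hc E]].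
  unfold chord. rewrite E. apply Rdiv_lt_0_compat; [|lra].
  apply Rmult_lt_0_compat; [apply Hgood; lra|lra].
Qed.

Section Blend.

Variable eps : R.
Hypothesis Hmargin : forall s, al <= s <= be -> forall t v, Rabs (t - T s) <= eps ->
  (forall i, (i <= d)%nat -> Rabs (v i - W i s) <= eps) -> kasner_form d p t v < 0.
Variables x y : R.
Hypotheses (Hx : al <= x) (Hxy : x < y) (Hy : y <= be).
Hypothesis Hchord_near : forall i u, (i <= d)%nat -> x <= u <= y ->
  Rabs (chord F x y i - W i u) <= eps.
Hypothesis Htime_near : forall u, x <= u <= y -> Rabs (T x - T u) <= eps / 2.

Lemma chord_blend_FDTL l : 0 <= l <= 1 -> smooth_FDTL d p x y
  (fun i u => (1 - l) * F i u + l * (F i x + (u - x) * chord F x y i)).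
Proof.
  intros Hl. destruct HF as [Hsm Hgood]. split.
  { intros i Hi. apply smooth_plus; apply smooth_scal; [apply Hsm, Hi|apply smooth_affine]. }
  intros u Hu. assert (Hu' : al <= u <= be) by lra.
  assert (Hc0 := chord_time_pos x y Hx Hxy Hy).
  assert (HTx : 0 < F 0%nat x) by (apply Hgood; lra).
  destruct (Hgood u Hu') as [HTu [HWu _]].
  rewrite Derive_blend by (apply Hsm; lia). split; [|split].
  - apply lerp_pos; auto. assert (0 <= (u - x) * chord F x y 0%nat) by (apply Rmult_le_pos; lra).
    lra.
  - apply lerp_pos; auto.
  - apply (Hmargin u Hu').
    + eapply Rle_trans; [apply Rabs_lerp_sub, Hl|]. fold (T u) (T x) (T y).
      replace eps with (2 * (eps / 2)) by field. unfold chord. apply secant_near; auto.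
      rewrite Rabs_minus_sym. apply Htime_near. lra.
    + intros i Hi. rewrite Derive_blend by (apply Hsm, Hi).
      eapply Rle_trans; [apply Rabs_lerp_sub, Hl|]. apply Hchord_near; auto.
Qed.

Lemma chord_timelike_near t : T x <= t <= T y -> kasner_form d p t (chord F x y) < 0.
Proof.
  intros Ht. apply (Hmargin x); [lra| |intros i Hi; apply Hchord_near; auto; lra].
  assert (Rabs (T x - T y) <= eps / 2) by (apply Htime_near; lra).
  assert (0 <= eps) by (eapply Rle_trans; [apply Rabs_pos|apply (Hchord_near 0%nat x)]; lia || lra).
  unfold Rabs in *. repeat destruct Rcase_abs; lra.
Qed.

End Blend.

Lemma short_chords_timelike : exists eta, 0 < eta /\ forall x y,
  al <= x -> x < y -> y <= be -> y - x <= eta -> timelike_chord d p F x y.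
Proof.
  destruct timelike_margin as [eps [He Hm]].
  destruct (chord_near_Derive eps He) as [del1 [Hd1 Hc]].
  destruct (Heine_cor2 (f := T) (a := al) (b := be)
    (fun x _ => smooth_continuous _ x (proj1 HF 0%nat ltac:(lia))) (mkposreal (eps / 2) ltac:(lra)))
    as [del2 HT]. simpl in HT. assert (Hd2 := cond_pos del2).
  exists (Rmin del1 del2 / 2). split; [apply Rdiv_lt_0_compat; [apply Rmin_pos|]; lra|].
  intros x y Hx Hxy Hy Hyx.
  assert (Hm1 := Rmin_l del1 del2). assert (Hm2 := Rmin_r del1 del2).
  assert (Hcu : forall i u, (i <= d)%nat -> x <= u <= y -> Rabs (chord F x y i - W i u) <= eps)
    by (intros; left; apply Hc; auto; lra).
  assert (HTu : forall u, x <= u <= y -> Rabs (T x - T u) <= eps / 2)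
    by (intros u Hu; left; apply HT; try lra; unfold Rabs; destruct Rcase_abs; lra).
  split; [apply (chord_blend_FDTL eps)|apply (chord_timelike_near eps)]; auto.
Qed.

End ShortChords.

(** * Polygons *)

Definition ramp (x y s : R) : R := clamp 0 1 ((s - x) / (y - x)).

Lemma ramp_lo x y s : x < y -> s <= x -> ramp x y s = 0.
Proof.
  intros Hxy Hs. apply clamp_lo; [lra|]. apply Rle_div_l; lra.
Qed.

Lemma ramp_hi x y s : x < y -> y <= s -> ramp x y s = 1.
Proof.
  intros Hxy Hs. apply clamp_hi; [lra|]. apply Rle_div_r; lra.
Qed.

Lemma ramp_mid x y s : x < y -> x <= s <= y -> ramp x y s = (s - x) / (y - x).
Proof.
  intros Hxy Hs. apply clamp_id. split; [apply Rdiv_le_0_compat; lra|apply Rle_div_l; lra].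
Qed.

Fixpoint sumk (g : nat -> R) (K : nat) : R :=
  match K with 0%nat => 0 | S K' => sumk g K' + g K' end.

(* A sum of clamped ramps, hence continuous on the whole line and constant outside the grid. *)
Definition polygon (K : nat) (rho : nat -> R) (Y : nat -> pt) (s : R) : pt := fun i =>
  Y 0%nat i + sumk (fun m => (Y (S m) i - Y m i) * ramp (rho m) (rho (S m)) s) K.

Definition slope (rho : nat -> R) (Y : nat -> pt) (m i : nat) : R :=
  (Y (S m) i - Y m i) / (rho (S m) - rho m).

Lemma polygon_on_segment K rho Y m s i : ascending K rho -> (m < K)%nat ->
  rho m <= s <= rho (S m) -> polygon K rho Y s i = Y m i + (s - rho m) * slope rho Y m i.
Proof.
  intros HS Hm Hs. unfold polygon.
  enough (C : forall n, (n <= K)%nat ->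
    sumk (fun j => (Y (S j) i - Y j i) * ramp (rho j) (rho (S j)) s) n =
    if (n <=? m)%nat then Y n i - Y 0%nat i
    else Y m i - Y 0%nat i + (s - rho m) * slope rho Y m i).
  { rewrite C by lia. replace (K <=? m)%nat with false by (symmetry; apply Nat.leb_gt; lia). ring. }
  induction n as [|n IH]; intros Hn; simpl sumk; [simpl; ring|].
  rewrite IH by lia. assert (Hpos : rho n < rho (S n)) by (apply HS; lia).
  destruct (Nat.lt_total n m) as [h|[<-|h]].
  - replace (n <=? m)%nat with true by (symmetry; apply Nat.leb_le; lia).
    replace (S n <=? m)%nat with true by (symmetry; apply Nat.leb_le; lia).
    assert (rho (S n) <= rho m) by (apply (ascending_le K); auto; lia).
    rewrite ramp_hi by lra. ring.
  - rewrite Nat.leb_refl. replace (S n <=? n)%nat with false by (symmetry; apply Nat.leb_gt; lia).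
    rewrite ramp_mid by lra. unfold slope. field. lra.
  - replace (n <=? m)%nat with false by (symmetry; apply Nat.leb_gt; lia).
    replace (S n <=? m)%nat with false by (symmetry; apply Nat.leb_gt; lia).
    assert (rho (S m) <= rho n) by (apply (ascending_le K); auto; lia).
    rewrite ramp_lo by lra. ring.
Qed.

Lemma polygon_start K rho Y i : ascending K rho -> (0 < K)%nat ->
  polygon K rho Y (rho 0%nat) i = Y 0%nat i.
Proof.
  intros HS HK. rewrite (polygon_on_segment K rho Y 0); auto; [ring|].
  assert (rho 0%nat < rho 1%nat) by (apply HS; lia). lra.
Qed.

Lemma polygon_end K rho Y i : ascending K rho -> (0 < K)%nat ->
  polygon K rho Y (rho K) i = Y K i.
Proof.
  intros HS HK. destruct K as [|K]; [lia|].
  assert (rho K < rho (S K)) by (apply HS; lia).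
  rewrite (polygon_on_segment (S K) rho Y K) by (auto; lra). unfold slope. field. lra.
Qed.

Lemma polygon_continuous K rho Y i x : ascending K rho ->
  continuity_pt (fun s => polygon K rho Y s i) x.
Proof.
  intros HS. unfold polygon. apply continuity_pt_plus; [apply continuity_pt_const; intros ? ?; reflexivity|].
  induction K as [|K IH]; simpl.
  - apply continuity_pt_const. intros ? ?; reflexivity.
  - apply continuity_pt_plus; [apply IH; intros j Hj; apply HS; lia|].
    apply continuity_pt_mult; [apply continuity_pt_const; intros ? ?; reflexivity|].
    unfold ramp. apply (continuity_pt_comp (fun s => (s - rho K) / (rho (S K) - rho K))).
    + reg.
    + apply clamp_continuous. lra.
Qed.

Definition chords_timelike (d : nat) (p : nat -> R) (K : nat) (Y : nat -> pt) : Prop :=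
  forall m, (m < K)%nat -> forall t, Y m 0%nat <= t <= Y (S m) 0%nat ->
    kasner_form d p t (fun i => Y (S m) i - Y m i) < 0.

Lemma polygon_FDTL d p a b K rho Y : a < b -> grid K rho a b ->
  0 < Y 0%nat 0%nat -> ascending K (fun m => Y m 0%nat) -> chords_timelike d p K Y ->
  FDTL_curve d p a b (polygon K rho Y).
Proof.
  intros Hab [HS [H0 HK]] HY0 HYS HQ. apply FDTL_curveE. split; [exact Hab|].
  exists K, rho, (fun m i x => Y m i + (x - rho m) * slope rho Y m i).
  split; [repeat split; auto|]. intros m Hm.
  split; [split|intros u Hu i _; apply polygon_on_segment; auto].
  { intros i _. apply smooth_affine. }
  intros u Hu. rewrite Derive_affine.
  assert (Hr : rho m < rho (S m)) by (apply HS, Hm).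
  assert (Hz : Y m 0%nat < Y (S m) 0%nat) by (apply HYS, Hm).
  assert (Hz0 : 0 < Y m 0%nat).
  { destruct m as [|m']; [exact HY0|].
    assert (Y 0%nat 0%nat < Y (S m') 0%nat) by (apply (ascending_lt K (fun m => Y m 0%nat)); auto; lia).
    lra. }
  assert (Hsl : 0 < slope rho Y m 0%nat) by (apply Rdiv_lt_0_compat; lra).
  set (t := Y m 0%nat + (u - rho m) * slope rho Y m 0%nat).
  assert (Ht : Y m 0%nat <= t <= Y (S m) 0%nat).
  { assert (0 <= (u - rho m) * slope rho Y m 0%nat) by (apply Rmult_le_pos; lra).
    split; [unfold t; lra|]. unfold t, slope.
    replace (Y m 0%nat + (u - rho m) * ((Y (S m) 0%nat - Y m 0%nat) / (rho (S m) - rho m)))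
      with (Y m 0%nat + (u - rho m) / (rho (S m) - rho m) * (Y (S m) 0%nat - Y m 0%nat))
      by (field; lra).
    assert ((u - rho m) / (rho (S m) - rho m) <= 1) by (apply Rle_div_l; lra). nra. }
  split; [lra|split; [exact Hsl|]].
  rewrite (kasner_form_ext d p t _ (fun i => / (rho (S m) - rho m) * (Y (S m) i - Y m i)))
    by (intros; rewrite Derive_affine; unfold slope; field; lra).
  rewrite kasner_formZ.
  assert (0 < (/ (rho (S m) - rho m)) ^ 2) by (apply pow_lt, Rinv_0_lt_compat; lra).
  assert (HQt := HQ m Hm t Ht). nra.
Qed.

Lemma ascending_interp K z0 z1 mu : 0 <= mu <= 1 -> ascending K z0 -> ascending K z1 ->
  ascending K (fun m => (1 - mu) * z0 m + mu * z1 m).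
Proof.
  intros Hmu H0 H1 j Hj. specialize (H0 j Hj). specialize (H1 j Hj).
  assert ((1 - mu) * z0 j <= (1 - mu) * z0 (S j)) by (apply Rmult_le_compat_l; lra).
  assert (mu * z1 j <= mu * z1 (S j)) by (apply Rmult_le_compat_l; lra).
  destruct (Rle_lt_or_eq_dec 0 mu (proj1 Hmu)) as [Hmu0|<-]; [|lra].
  assert (mu * z1 j < mu * z1 (S j)) by (apply Rmult_lt_compat_l; lra). lra.
Qed.

Lemma chords_timelike_interp d p K Y0 Y1 mu : 0 <= mu <= 1 ->
  (forall m, (m <= K)%nat -> Y0 m 0%nat = Y1 m 0%nat) ->
  chords_timelike d p K Y0 -> chords_timelike d p K Y1 ->
  chords_timelike d p K (fun m i => (1 - mu) * Y0 m i + mu * Y1 m i).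
Proof.
  intros Hmu HY H0 H1 m Hm t Ht. cbv beta in Ht.
  rewrite <- !HY in Ht by lia.
  replace ((1 - mu) * Y0 m 0%nat + mu * Y0 m 0%nat) with (Y0 m 0%nat) in Ht by ring.
  replace ((1 - mu) * Y0 (S m) 0%nat + mu * Y0 (S m) 0%nat) with (Y0 (S m) 0%nat) in Ht by ring.
  rewrite (kasner_form_ext d p t _ (fun i => (1 - mu) * (Y0 (S m) i - Y0 m i) + mu * (Y1 (S m) i - Y1 m i)))
    by (intros; ring).
  apply kasner_form_neg_convex; auto.
  - rewrite !HY by lia. reflexivity.
  - apply H1; auto. rewrite <- !HY by lia. exact Ht.
Qed.

(** * Timelike homotopies *)

Definition homotopy_concat (G1 G2 : R -> R -> pt) (u : R) : R -> pt :=
  if Rle_dec u (1 / 2) then G1 (2 * u) else G2 (2 * u - 1).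

Lemma continuous_on_rect_concat d a b G1 G2 :
  continuous_on_rect d a b G1 -> continuous_on_rect d a b G2 ->
  (forall s i, a <= s <= b -> (i <= d)%nat -> G1 1 s i = G2 0 s i) ->
  continuous_on_rect d a b (homotopy_concat G1 G2).
Proof.
  intros C1 C2 E i Hi u s Hu Hs eps He. unfold homotopy_concat.
  destruct (Rtotal_order u (1 / 2)) as [Hlt|[Heq|Hgt]].
  - destruct (C1 i Hi (2 * u) s ltac:(lra) Hs eps He) as [d1 [Hd1 H1]].
    exists (Rmin (d1 / 2) (1 / 2 - u)). split; [apply Rmin_pos; lra|].
    intros u' s' Hu' Hs' Hdu Hds. assert (Hm1 := Rmin_l (d1 / 2) (1 / 2 - u)).
    assert (Hm2 := Rmin_r (d1 / 2) (1 / 2 - u)).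
    destruct (Rle_dec u' (1 / 2)); [|unfold Rabs in Hdu; destruct Rcase_abs in Hdu; lra].
    destruct (Rle_dec u (1 / 2)); [|lra].
    apply H1; try lra. replace (2 * u' - 2 * u) with (2 * (u' - u)) by ring.
    rewrite Rabs_mult, Rabs_right by lra. lra.
  - subst u. destruct (C1 i Hi 1 s ltac:(lra) Hs eps He) as [d1 [Hd1 H1]].
    destruct (C2 i Hi 0 s ltac:(lra) Hs eps He) as [d2 [Hd2 H2]].
    exists (Rmin d1 d2 / 2). split; [apply Rdiv_lt_0_compat; [apply Rmin_pos|]; lra|].
    intros u' s' Hu' Hs' Hdu Hds. assert (Hm1 := Rmin_l d1 d2). assert (Hm2 := Rmin_r d1 d2).
    destruct (Rle_dec (1 / 2) (1 / 2)) as [_|]; [|lra]. replace (2 * (1 / 2)) with 1 by field.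
    destruct (Rle_dec u' (1 / 2)).
    + apply H1; try lra. replace (2 * u' - 1) with (2 * (u' - 1 / 2)) by field.
      rewrite Rabs_mult, Rabs_right by lra. lra.
    + rewrite E by auto. apply H2; try lra.
      replace (2 * u' - 1 - 0) with (2 * (u' - 1 / 2)) by field.
      rewrite Rabs_mult, Rabs_right by lra. lra.
  - destruct (C2 i Hi (2 * u - 1) s ltac:(lra) Hs eps He) as [d2 [Hd2 H2]].
    exists (Rmin (d2 / 2) (u - 1 / 2)). split; [apply Rmin_pos; lra|].
    intros u' s' Hu' Hs' Hdu Hds. assert (Hm1 := Rmin_l (d2 / 2) (u - 1 / 2)).
    assert (Hm2 := Rmin_r (d2 / 2) (u - 1 / 2)).
    destruct (Rle_dec u' (1 / 2)); [unfold Rabs in Hdu; destruct Rcase_abs in Hdu; lra|].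
    destruct (Rle_dec u (1 / 2)); [lra|].
    apply H2; try lra. replace (2 * u' - 1 - (2 * u - 1)) with (2 * (u' - u)) by ring.
    rewrite Rabs_mult, Rabs_right by lra. lra.
Qed.

Lemma timelike_homotopic_start d p a b g0 g1 :
  timelike_homotopic d p a b g0 g1 -> ptEq d (g1 a) (g0 a) /\ ptEq d (g1 b) (g0 b).
Proof.
  intros [G [_ [E HF]]]. destruct (HF 1 ltac:(lra)) as [[Hab _] [Ea Eb]].
  destruct (E a ltac:(lra)) as [_ Ea']. destruct (E b ltac:(lra)) as [_ Eb'].
  split; intros i Hi; [rewrite <- Ea'|rewrite <- Eb']; auto.
Qed.

Lemma timelike_homotopic_trans d p a b g0 g1 g2 :
  timelike_homotopic d p a b g0 g1 -> timelike_homotopic d p a b g1 g2 ->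
  timelike_homotopic d p a b g0 g2.
Proof.
  intros H01 H12. destruct (timelike_homotopic_start _ _ _ _ _ _ H01) as [Ea Eb].
  destruct H01 as [G1 [C1 [E1 F1]]], H12 as [G2 [C2 [E2 F2]]].
  exists (homotopy_concat G1 G2). split; [|split].
  - apply continuous_on_rect_concat; auto. intros s i Hs Hi.
    destruct (E1 s Hs) as [_ e1]. destruct (E2 s Hs) as [e2 _]. rewrite e1, e2 by auto. reflexivity.
  - intros s Hs. unfold homotopy_concat.
    destruct (Rle_dec 0 (1 / 2)); [|lra]. destruct (Rle_dec 1 (1 / 2)); [lra|].
    replace (2 * 0) with 0 by ring. replace (2 * 1 - 1) with 1 by ring.
    split; [apply E1|apply E2]; auto.
  - intros u Hu. unfold homotopy_concat. destruct Rle_dec; [apply F1; lra|].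
    destruct (F2 (2 * u - 1) ltac:(lra)) as [HF [Ha Hb]]. split; [exact HF|].
    split; intros i Hi; [rewrite Ha, <- Ea|rewrite Hb, <- Eb]; auto.
Qed.

Lemma timelike_homotopic_sym d p a b g0 g1 :
  timelike_homotopic d p a b g0 g1 -> timelike_homotopic d p a b g1 g0.
Proof.
  intros H01. destruct (timelike_homotopic_start _ _ _ _ _ _ H01) as [Ea Eb].
  destruct H01 as [G [C [E HF]]]. exists (fun u => G (1 - u)). split; [|split].
  - intros i Hi u s Hu Hs eps He. destruct (C i Hi (1 - u) s ltac:(lra) Hs eps He) as [del [Hd H]].
    exists del. split; [exact Hd|]. intros u' s' Hu' Hs' Hdu Hds. apply H; try lra.
    replace (1 - u' - (1 - u)) with (- (u' - u)) by ring. rewrite Rabs_Ropp. exact Hdu.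
  - intros s Hs. replace (1 - 0) with 1 by ring. replace (1 - 1) with 0 by ring.
    destruct (E s Hs). split; assumption.
  - intros u Hu. destruct (HF (1 - u) ltac:(lra)) as [HFu [Ha Hb]]. split; [exact HFu|].
    split; intros i Hi; [rewrite Ha, <- Ea|rewrite Hb, <- Eb]; auto.
Qed.

Lemma continuous_on_rect_of_2d d a b G :
  (forall i u s, (i <= d)%nat -> 0 <= u <= 1 -> a <= s <= b ->
     continuity_2d_pt (fun u s => G u s i) u s) ->
  continuous_on_rect d a b G.
Proof.
  intros H i Hi u s Hu Hs eps He. destruct (H i u s Hi Hu Hs (mkposreal eps He)) as [del Hd].
  exists del. split; [apply cond_pos|]. intros u' s' _ _ Hdu Hds. apply Hd; auto.
Qed.

Lemma FDTL_curve_ext d p a b g g' : FDTL_curve d p a b g ->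
  (forall u i, a <= u <= b -> (i <= d)%nat -> g' u i = g u i) -> FDTL_curve d p a b g'.
Proof.
  rewrite !FDTL_curveE. intros [Hab [k [s [f [Hs HP]]]]] E. split; [exact Hab|].
  exists k, s, f. split; [exact Hs|]. intros j Hj. destruct (HP j Hj) as [HF Ef].
  split; [exact HF|]. intros u Hu i Hi.
  assert (a <= s j /\ s (S j) <= b) as [] by (split; apply (grid_range k s a b); auto; lia).
  rewrite E, Ef by (auto; lra). reflexivity.
Qed.

Lemma timelike_homotopic_straight d p a b g h : a < b ->
  (forall i x, (i <= d)%nat -> continuity_pt (fun y => g (clamp a b y) i) x) ->
  (forall i x, (i <= d)%nat -> continuity_pt (fun y => h y i) x) ->
  ptEq d (h a) (g a) -> ptEq d (h b) (g b) ->
  (forall l, 0 <= l <= 1 -> FDTL_curve d p a b (fun u i => (1 - l) * g u i + l * h u i)) ->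
  timelike_homotopic d p a b g h.
Proof.
  intros Hab Hg Hh Ea Eb HF. exists (fun l u i => (1 - l) * g (clamp a b u) i + l * h u i).
  split; [|split].
  - apply continuous_on_rect_of_2d. intros i u s Hi _ _.
    apply continuity_2d_pt_plus; apply continuity_2d_pt_mult.
    + apply continuity_2d_pt_minus; [apply continuity_2d_pt_const|apply continuity_2d_pt_id1].
    + apply continuity_2d_pt_snd, Hg, Hi.
    + apply continuity_2d_pt_id1.
    + apply continuity_2d_pt_snd, Hh, Hi.
  - intros s Hs. rewrite clamp_id by exact Hs. split; intros i _; ring.
  - intros l Hl. split.
    + apply (FDTL_curve_ext d p a b _ _ (HF l Hl)). intros u i Hu _. rewrite clamp_id by exact Hu. reflexivity.
    + split; intros i Hi; cbv beta; rewrite clamp_id by lra; [rewrite Ea|rewrite Eb]; auto; ring.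
Qed.

Lemma polygon_ext K rho rho' Y Y' s i : (forall m, rho m = rho' m) ->
  (forall m, Y m i = Y' m i) -> polygon K rho Y s i = polygon K rho' Y' s i.
Proof.
  intros H1 H2. unfold polygon. rewrite H2. f_equal.
  induction K as [|K IH]; simpl; [reflexivity|]. now rewrite IH, !H1, !H2.
Qed.

Lemma polygon_interp_continuous K rho0 rho1 Y0 Y1 i mu s : 0 <= mu <= 1 ->
  ascending K rho0 -> ascending K rho1 ->
  continuity_2d_pt (fun mu s => polygon K (fun m => (1 - mu) * rho0 m + mu * rho1 m)
                                  (fun m i => (1 - mu) * Y0 m i + mu * Y1 m i) s i) mu s.
Proof.
  intros Hmu H0 H1.
  assert (Hlin : forall x y, continuity_2d_pt (fun mu _ => (1 - mu) * x + mu * y) mu s).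
  { intros x y. apply continuity_2d_pt_plus; apply continuity_2d_pt_mult;
      try apply continuity_2d_pt_minus; auto using continuity_2d_pt_const, continuity_2d_pt_id1. }
  unfold polygon. apply continuity_2d_pt_plus; [apply Hlin|].
  induction K as [|K IH]; simpl; [apply continuity_2d_pt_const|].
  apply continuity_2d_pt_plus.
  { apply IH; intros j Hj; [apply H0|apply H1]; lia. }
  apply continuity_2d_pt_mult; [apply continuity_2d_pt_minus; apply Hlin|].
  apply continuity_1d_2d_pt_comp; [apply clamp_continuous; lra|].
  apply continuity_2d_pt_mult; [apply continuity_2d_pt_minus; [apply continuity_2d_pt_id2|apply Hlin]|].
  apply continuity_2d_pt_inv; [apply continuity_2d_pt_minus; apply Hlin|].
  assert (Hasc := ascending_interp (S K) rho0 rho1 mu Hmu H0 H1 K ltac:(lia)). lra.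
Qed.

Lemma polygon_interp_homotopic d p a b K rho0 rho1 Y0 Y1 : a < b ->
  grid K rho0 a b -> grid K rho1 a b ->
  0 < Y0 0%nat 0%nat -> ascending K (fun m => Y0 m 0%nat) ->
  (forall m, (m <= K)%nat -> Y0 m 0%nat = Y1 m 0%nat) ->
  ptEq d (Y1 0%nat) (Y0 0%nat) -> ptEq d (Y1 K) (Y0 K) ->
  chords_timelike d p K Y0 -> chords_timelike d p K Y1 ->
  timelike_homotopic d p a b (polygon K rho0 Y0) (polygon K rho1 Y1).
Proof.
  intros Hab Hg0 Hg1 HY0 HYS HY E0 EK HQ0 HQ1.
  assert (HK := grid_size_pos K rho0 a b Hg0 Hab).
  destruct Hg0 as [HS0 [H00 H0K]], Hg1 as [HS1 [H10 H1K]].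
  set (rho := fun mu m => (1 - mu) * rho0 m + mu * rho1 m).
  set (Y := fun mu m i => (1 - mu) * Y0 m i + mu * Y1 m i).
  assert (Hrho : forall mu, 0 <= mu <= 1 -> grid K (rho mu) a b).
  { intros mu Hmu. split; [apply ascending_interp; auto|].
    unfold rho. rewrite H00, H10, H0K, H1K. split; ring. }
  assert (HYt : forall mu m, (m <= K)%nat -> Y mu m 0%nat = Y0 m 0%nat)
    by (intros mu m Hm; unfold Y; rewrite <- HY by exact Hm; ring).
  assert (Hends : forall mu i, 0 <= mu <= 1 -> (i <= d)%nat ->
    polygon K (rho mu) (Y mu) a i = Y0 0%nat i /\ polygon K (rho mu) (Y mu) b i = Y0 K i).
  { intros mu i Hmu Hi. destruct (Hrho mu Hmu) as [HS [Ha Hb]].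
    unfold Y. split; [rewrite <- Ha, polygon_start, E0|rewrite <- Hb, polygon_end, EK]; auto; ring. }
  exists (fun mu => polygon K (rho mu) (Y mu)). split; [|split].
  - apply continuous_on_rect_of_2d. intros i mu s _ Hmu _.
    apply polygon_interp_continuous; auto.
  - intros s _. split; intros i _; apply polygon_ext; intros m; unfold rho, Y; ring.
  - intros mu Hmu. split.
    + apply polygon_FDTL; auto.
      * rewrite HYt by lia. exact HY0.
      * intros m Hm. rewrite !HYt by lia. apply HYS, Hm.
      * apply chords_timelike_interp; auto.
    + split; intros i Hi; [rewrite (proj1 (Hends mu i Hmu Hi)), <- H00, polygon_start
                           |rewrite (proj2 (Hends mu i Hmu Hi)), <- H0K, polygon_end]; auto.
Qed.

(** * Inscribed polygons at common times *)

Section InscribedPolygon.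

Variables (d : nat) (p : nat -> R) (a b : R) (g : R -> pt)
  (k : nat) (s : nat -> R) (f : nat -> nat -> R -> R).
Hypothesis Hab : a < b.
Hypothesis Hg : FDTL_pieces d p a b g k s f.

Lemma pieces_short_chords_timelike : exists eta, 0 < eta /\ forall j, (j < k)%nat ->
  forall x y, s j <= x -> x < y -> y <= s (S j) -> y - x <= eta -> timelike_chord d p (f j) x y.
Proof.
  destruct Hg as [[HS _] HP].
  apply (uniform_pos k (fun j eta => forall x y, s j <= x -> x < y -> y <= s (S j) ->
    y - x <= eta -> timelike_chord d p (f j) x y)).
  { intros j e1 e2 He H x y H1 H2 H3 H4. apply H; auto. lra. }
  intros j Hj. apply (short_chords_timelike d p (s j) (s (S j)) (f j)); [apply HS, Hj|apply HP, Hj].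
Qed.

Variables (eta : R) (K : nat) (sg : nat -> R).
Hypothesis Heta : forall j, (j < k)%nat ->
  forall x y, s j <= x -> x < y -> y <= s (S j) -> y - x <= eta -> timelike_chord d p (f j) x y.
Hypothesis Hsg : grid K sg a b.
Hypothesis Hrefines : refines K sg k s.
Hypothesis Hmesh : mesh_le K sg eta.

Let Y m := g (sg m).

Lemma inscribed_segment m : (m < K)%nat -> exists j, (j < k)%nat /\
  s j <= sg m /\ sg (S m) <= s (S j) /\ timelike_chord d p (f j) (sg m) (sg (S m)) /\
  forall u i, sg m <= u <= sg (S m) -> (i <= d)%nat ->
    g u i = f j i u /\ polygon K sg Y u i = f j i (sg m) + (u - sg m) * chord (f j) (sg m) (sg (S m)) i.
Proof.
  intros Hm. destruct (refines_segment k s K sg a b m (proj1 Hg) Hsg Hrefines Hm) as [j [Hj [E1 E2]]].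
  assert (Hlt : sg m < sg (S m)) by (apply (proj1 Hsg), Hm).
  destruct Hg as [_ HP]. destruct (HP j Hj) as [_ Ef].
  assert (Hc : timelike_chord d p (f j) (sg m) (sg (S m)))
    by (apply Heta; auto; exact (Hmesh m Hm)).
  exists j. split; [exact Hj|]. split; [exact E1|]. split; [exact E2|]. split; [exact Hc|].
  intros u i Hu Hi. split; [apply Ef; auto; lra|].
  rewrite (polygon_on_segment K sg Y m) by (auto; apply (proj1 Hsg)).
  unfold slope, chord, Y. rewrite !Ef by (auto; lra). reflexivity.
Qed.

Lemma inscribed_chords_timelike : chords_timelike d p K Y.
Proof.
  intros m Hm t Ht. destruct (inscribed_segment m Hm) as [j [_ [_ [_ [[_ Hchord] Hagree]]]]].
  assert (Hlt : sg m < sg (S m)) by (apply (proj1 Hsg), Hm).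
  assert (E0 : forall i, (i <= d)%nat -> Y m i = f j i (sg m))
    by (intros i Hi; apply Hagree; auto; lra).
  assert (E1 : forall i, (i <= d)%nat -> Y (S m) i = f j i (sg (S m)))
    by (intros i Hi; apply Hagree; auto; lra).
  rewrite (kasner_form_ext d p t _ (fun i => (sg (S m) - sg m) * chord (f j) (sg m) (sg (S m)) i)).
  - rewrite kasner_formZ. assert (0 < (sg (S m) - sg m) ^ 2) by (apply pow_lt; lra).
    assert (kasner_form d p t (chord (f j) (sg m) (sg (S m))) < 0); [|nra].
    apply Hchord. rewrite <- E0, <- E1 by lia. exact Ht.
  - unfold chord. rewrite E0, E1 by lia. field. lra.
  - intros i Hi. unfold chord. rewrite E0, E1 by lia. field. lra.
Qed.

Lemma inscribed_blend_FDTL l : 0 <= l <= 1 ->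
  FDTL_curve d p a b (fun u i => (1 - l) * g u i + l * polygon K sg Y u i).
Proof.
  intros Hl. destruct (fin_choice 0%nat K _ inscribed_segment) as [J HJ].
  apply FDTL_curveE. split; [exact Hab|].
  exists K, sg, (fun m i u => (1 - l) * f (J m) i u
                             + l * (f (J m) i (sg m) + (u - sg m) * chord (f (J m)) (sg m) (sg (S m)) i)).
  split; [exact Hsg|]. intros m Hm.
  destruct (HJ m Hm) as [_ [_ [_ [[Hblend _] Hagree]]]]. split; [apply Hblend, Hl|].
  intros u Hu i Hi. destruct (Hagree u i Hu Hi) as [-> ->]. reflexivity.
Qed.

End InscribedPolygon.

Lemma inscribed_polygon d p a b g k s f : a < b -> FDTL_pieces d p a b g k s f ->
  exists eta, 0 < eta /\ forall K sg, grid K sg a b -> refines K sg k s -> mesh_le K sg eta ->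
    timelike_homotopic d p a b g (polygon K sg (fun m => g (sg m))) /\
    chords_timelike d p K (fun m => g (sg m)).
Proof.
  intros Hab Hg. destruct (pieces_short_chords_timelike d p a b g k s f Hg) as [eta [He Heta]].
  exists eta. split; [exact He|]. intros K sg Hsg Hrefines Hmesh.
  split; [|apply (inscribed_chords_timelike d p a b g k s f Hg eta K sg); auto].
  assert (HK := grid_size_pos K sg a b Hsg Hab). destruct Hsg as [HS [H0 HK']].
  apply timelike_homotopic_straight; auto.
  - intros i x Hi. apply (curve_continuous d p a b g k s f); auto.
  - intros i x _. apply polygon_continuous, HS.
  - intros i _. rewrite <- H0 at 1. now rewrite polygon_start, H0.
  - intros i _. rewrite <- HK' at 1. now rewrite polygon_end, HK'.
  - intros l Hl. apply (inscribed_blend_FDTL d p a b g k s f Hab Hg eta K sg); auto. split; auto.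
Qed.

Lemma curve_time_grid d p a b g k s f : a < b -> FDTL_pieces d p a b g k s f ->
  exists c, 0 < c /\ forall K z, grid K z (g a 0%nat) (g b 0%nat) ->
    (forall j, (j <= k)%nat -> is_node K z (g (s j) 0%nat)) ->
    exists sg, grid K sg a b /\ refines K sg k s /\
      (forall m, (m <= K)%nat -> g (sg m) 0%nat = z m) /\
      (forall m, (m < K)%nat -> c * (sg (S m) - sg m) <= z (S m) - z m).
Proof.
  intros Hab Hg. destruct (curve_time_speed d p a b g k s f Hg) as [c [Hc Hspeed]].
  exists c. split; [exact Hc|]. intros K z Hz Hn.
  destruct (fin_choice 0 (S K) (fun m x => a <= x <= b /\ g x 0%nat = z m)) as [sg Hsg].
  { intros m Hm. apply (curve_time_ivt d p a b g k s f Hab Hg), (grid_range K z); auto; lia. }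
  assert (Hsg' : forall m, (m <= K)%nat -> a <= sg m <= b /\ g (sg m) 0%nat = z m)
    by (intros; apply Hsg; lia).
  assert (Hinj := curve_time_inj d p a b g k s f Hab Hg).
  destruct Hz as [HzS [Hz0 HzK]].
  assert (Hgrid : grid K sg a b).
  { split; [|split].
    - intros m Hm. destruct (Hsg' m ltac:(lia)) as [I1 E1]. destruct (Hsg' (S m) ltac:(lia)) as [I2 E2].
      destruct (Rlt_le_dec (sg m) (sg (S m))) as [h|h]; [exact h|].
      assert (g (sg (S m)) 0%nat <= g (sg m) 0%nat) by (apply (curve_time_le d p a b g k s f); auto; lra).
      assert (z m < z (S m)) by (apply HzS, Hm). lra.
    - destruct (Hsg' 0%nat ltac:(lia)) as [I E]. apply Hinj; auto; lra.
    - destruct (Hsg' K ltac:(lia)) as [I E]. apply Hinj; auto; lra. }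
  assert (Hrefines : refines K sg k s).
  { intros j Hj. destruct (Hn j Hj) as [n [Hn' E]]. exists n. split; [exact Hn'|].
    destruct (Hsg' n Hn') as [I E2]. apply Hinj; auto; [|congruence].
    apply (grid_range k s a b); [apply Hg|exact Hj]. }
  exists sg. split; [exact Hgrid|split; [exact Hrefines|split; [intros m Hm; apply Hsg', Hm|]]].
  intros m Hm.
  destruct (refines_segment k s K sg a b m (proj1 Hg) Hgrid Hrefines Hm) as [j [Hj [E1 E2]]].
  destruct (Hsg' m ltac:(lia)) as [_ <-]. destruct (Hsg' (S m) ltac:(lia)) as [_ <-].
  apply (Hspeed j Hj); [exact E1|apply (proj1 Hgrid), Hm|exact E2].
Qed.

Lemma common_time_grids d p a b g0 k0 s0 f0 g1 k1 s1 f1 eta0 eta1 : a < b ->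
  FDTL_pieces d p a b g0 k0 s0 f0 -> FDTL_pieces d p a b g1 k1 s1 f1 ->
  g1 a 0%nat = g0 a 0%nat -> g1 b 0%nat = g0 b 0%nat -> 0 < eta0 -> 0 < eta1 ->
  exists K z sg0 sg1, ascending K z /\
    grid K sg0 a b /\ refines K sg0 k0 s0 /\ mesh_le K sg0 eta0 /\
    grid K sg1 a b /\ refines K sg1 k1 s1 /\ mesh_le K sg1 eta1 /\
    forall m, (m <= K)%nat -> g0 (sg0 m) 0%nat = z m /\ g1 (sg1 m) 0%nat = z m.
Proof.
  intros Hab Hg0 Hg1 Ea Eb He0 He1.
  destruct (curve_time_grid d p a b g0 k0 s0 f0 Hab Hg0) as [c0 [Hc0 N0]].
  destruct (curve_time_grid d p a b g1 k1 s1 f1 Hab Hg1) as [c1 [Hc1 N1]].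
  set (h := Rmin (eta0 * c0) (eta1 * c1)).
  assert (Hh0 : h <= eta0 * c0) by apply Rmin_l. assert (Hh1 : h <= eta1 * c1) by apply Rmin_r.
  set (L := map (fun j => g0 (s0 j) 0%nat) (seq 0 (S k0)) ++ map (fun j => g1 (s1 j) 0%nat) (seq 0 (S k1))).
  assert (HL0 : forall j, (j <= k0)%nat -> In (g0 (s0 j) 0%nat) L).
  { intros j Hj. apply in_or_app. left. apply (in_map (fun j => g0 (s0 j) 0%nat)), in_seq. lia. }
  assert (HL1 : forall j, (j <= k1)%nat -> In (g1 (s1 j) 0%nat) L).
  { intros j Hj. apply in_or_app. right. apply (in_map (fun j => g1 (s1 j) 0%nat)), in_seq. lia. }
  destruct (grid_fine_through (g0 a 0%nat) (g0 b 0%nat) h L) as [K [z [Hz [Hn Hmesh]]]].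
  { apply (curve_time_lt d p a b g0 k0 s0 f0); auto; lra. }
  { apply Rmin_pos; apply Rmult_lt_0_compat; auto. }
  { intros x Hx. apply in_app_or in Hx.
    destruct Hx as [Hx|Hx]; apply in_map_iff in Hx; destruct Hx as [j [<- Hj]]; apply in_seq in Hj.
    - assert (I := grid_range k0 s0 a b j (proj1 Hg0) ltac:(lia)).
      split; apply (curve_time_le d p a b g0 k0 s0 f0); auto; lra.
    - assert (I := grid_range k1 s1 a b j (proj1 Hg1) ltac:(lia)).
      rewrite <- Ea, <- Eb. split; apply (curve_time_le d p a b g1 k1 s1 f1); auto; lra. }
  destruct (N0 K z Hz) as [sg0 [Hsg0 [Hr0 [Ht0 Hs0]]]]; [intros j Hj; apply Hn, HL0, Hj|].
  destruct (N1 K z) as [sg1 [Hsg1 [Hr1 [Ht1 Hs1]]]]; [rewrite Ea, Eb; exact Hz|intros j Hj; apply Hn, HL1, Hj|].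
  assert (M0 : mesh_le K sg0 eta0).
  { intros m Hm. specialize (Hs0 m Hm). specialize (Hmesh m Hm).
    apply (Rmult_le_reg_l c0); auto. lra. }
  assert (M1 : mesh_le K sg1 eta1).
  { intros m Hm. specialize (Hs1 m Hm). specialize (Hmesh m Hm).
    apply (Rmult_le_reg_l c1); auto. lra. }
  exists K, z, sg0, sg1. split; [apply Hz|]. do 6 (split; [assumption|]).
  intros m Hm. split; auto.
Qed.

Lemma FDTL_curves_homotopic d p a b g0 g1 :
  FDTL_curve d p a b g0 -> FDTL_curve d p a b g1 ->
  ptEq d (g1 a) (g0 a) -> ptEq d (g1 b) (g0 b) -> timelike_homotopic d p a b g0 g1.
Proof.
  rewrite !FDTL_curveE. intros [Hab [k0 [s0 [f0 Hg0]]]] [_ [k1 [s1 [f1 Hg1]]]] Ea Eb.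
  destruct (inscribed_polygon d p a b g0 k0 s0 f0 Hab Hg0) as [eta0 [He0 P0]].
  destruct (inscribed_polygon d p a b g1 k1 s1 f1 Hab Hg1) as [eta1 [He1 P1]].
  destruct (common_time_grids d p a b g0 k0 s0 f0 g1 k1 s1 f1 eta0 eta1)
    as [K [z [sg0 [sg1 [Hz [Hsg0 [Hr0 [Hm0 [Hsg1 [Hr1 [Hm1 Ht]]]]]]]]]]];
    auto; [apply Ea; lia|apply Eb; lia|].
  destruct (P0 K sg0 Hsg0 Hr0 Hm0) as [H0 Q0]. destruct (P1 K sg1 Hsg1 Hr1 Hm1) as [H1 Q1].
  apply (timelike_homotopic_trans _ _ _ _ _ _ _ H0), (timelike_homotopic_trans _ _ _ _ _ _ _)
    with (2 := timelike_homotopic_sym _ _ _ _ _ _ H1).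
  destruct Hsg0 as [HS0 [H00 H0K]], Hsg1 as [HS1 [H10 H1K]].
  apply polygon_interp_homotopic; auto; try split; auto.
  - rewrite H00. apply (curve_time_start_pos d p a b g0 k0 s0 f0 Hab Hg0).
  - intros m Hm. rewrite (proj1 (Ht m ltac:(lia))), (proj1 (Ht (S m) ltac:(lia))). apply Hz, Hm.
  - intros m Hm. rewrite (proj1 (Ht m Hm)), (proj2 (Ht m Hm)). reflexivity.
  - rewrite H00, H10. exact Ea.
  - rewrite H0K, H1K. exact Eb.
Qed.

Theorem lemma3p3 (d : nat) (p : nat -> R) :
  (3 <= d)%nat -> kasner_exponents d p -> future_one_connected d p.
Proof.
  intros _ _ P Q _ a b g0 g1 Hg0 [HP0 HQ0] Hg1 [HP1 HQ1].
  apply FDTL_curves_homotopic; auto.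
  - intros i Hi. rewrite HP0, HP1 by exact Hi. reflexivity.
  - intros i Hi. rewrite HQ0, HQ1 by exact Hi. reflexivity.
Qed.
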